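(* Fix $N\ge 1$, $L>0$, $\alpha>0$, $p>0$, $\lambda_e>0$ and $\epsilon\in(0,1)$. Let $K_1=\pi\lambda_e\Gamma(\frac{2}{\alpha}+1)$, $K_2=\frac{(L/N)^\alpha+1}{p}$, and $$R_e^{*}=\log_2\!\left[\frac{2p}{\alpha}\,W_0\!\left(\frac{\alpha}{2}\left[\frac{\ln\frac{1}{1-\epsilon}}{NK_1}\right]^{-\alpha/2}\right)+1\right].$$ Then: (i) for rates $R_t\ge R_s>0$, the constraint $\mathcal{P}_{\mathrm{so}}\le\epsilon$ holds if and only if $R_t-R_s\ge R_e^*$ (with equality $\mathcal{P}_{\mathrm{so}}=\epsilon$ iff $R_t-R_s=R_e^*$); (ii) the function $$\mathbb{U}(R_t)=\frac{(R_t-R_e^* )\exp\!\left[-K_2\left(2^{R_t}-1\right)\right]}{N},\qquad R_t>R_e^*,$$ is quasi-concave, and its unique maximizer is $$R_t^{*}=R_e^{*}+\frac{1}{\ln 2}W_0\!\left(\frac{2^{-R_e^{*}}}{K_2}\right);$$ (iii) consequently, the on-off-transmission throughput $\mathbb{U}_{\mathrm{OFT}}=\mathcal{P}'_t R_s/N$ is maximized over all $(R_t,R_s)$ with $R_t\ge R_s>0$ and $\mathcal{P}_{\mathrm{so}}\le\epsilon$ by $R_t=R_t^*$ and $$R_s=R_s^{*}=\frac{1}{\ln 2}W_0\!\left(\frac{2^{-R_e^{*}}}{K_2}\right).$$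
   Context: Setup (linear multihop network). Source and destination are at distance $L$, connected by $N$ equal-length hops of length $L/N$. Fix path-loss exponent $\alpha>0$, transmitter-side SNR $p>0$, eavesdropper density $\lambda_e>0$. Legitimate hop $n$ has received SNR $\mathrm{SNR}_n=\frac{pH_n}{(L/N)^\alpha+1}$ with $H_n$ i.i.d. exponential of mean 1. For each hop $n$, eavesdroppers form independent homogeneous Poisson point processes $\Phi_{ne}$ of intensity $\lambda_e$ on $\mathbb{R}^2$; eavesdropper $e\in\Phi_{ne}$ has SNR $pS_{ne}/(|X_{ne}|^\alpha+1)$, with $|X_{ne}|$ its distance to the hop-$n$ transmitter and $S_{ne}$ i.i.d. Exp(1) independent of everything. Wiretap code rates $R_t\ge R_s>0$, $R_e=R_t-R_s$, $\beta_t=2^{R_t}-1$, $\beta_e=2^{R_e}-1$. The end-to-end secrecy outage probability is $\mathcal{P}_{\mathrm{so}}=\mathbb{P}(\max_n\max_{e\in\Phi_{ne}}\mathrm{SNR}_{ne}>\beta_e)=1-\exp[-NK_1(\beta_e/p)^{-2/\alpha}e^{-\beta_e/p}]$. On-off transmission (OFT): a hop transmits only when $\mathrm{SNR}_n>\beta_t$, so the per-hop transmission probability is $\mathcal{P}'_t=\mathbb{P}(\mathrm{SNR}_n>\beta_t)=\exp[-\beta_t((L/N)^\alpha+1)/p]$, and the secure transmission throughput is $\mathbb{U}_{\mathrm{OFT}}=\mathcal{P}'_tR_s/N$. $W_0$ denotes the principal branch of the Lambert W function. *)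

From Stdlib Require Import Reals Lra ClassicalEpsilon Factorial.
Open Scope R_scope.

Definition W0 (x : R) : R :=
  epsilon (inhabits 0) (fun w => -1 <= w /\ w * exp w = x).

(* Euler's Gamma function, via the Gauss limit
   Gamma(s) = lim_n n! n^s / (s (s+1) ... (s+n)),  valid for s > 0. *)
Fixpoint rising (s : R) (n : nat) : R :=
  match n with
  | O => s
  | S k => rising s k * (s + INR (S k))
  end.

Definition Gamma (s : R) : R :=
  epsilon (inhabits 0)
    (fun g => Un_cv (fun n => INR (fact n) * Rpower (INR n) s / rising s n) g).

Definition log2 (x : R) : R := ln x / ln 2.

Definition beta (r : R) : R := Rpower 2 r - 1.

Definition K1 (lam alpha : R) : R := PI * lam * Gamma (2 / alpha + 1).

Definition K2 (N : nat) (L alpha p : R) : R :=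
  (Rpower (L / INR N) alpha + 1) / p.

(* End-to-end secrecy outage probability as a function of R_e = R_t - R_s.
   For R_e = 0 (beta_e = 0) every eavesdropper of the infinite PPP has
   positive SNR, so the outage probability is 1 (the limit of the formula). *)
Definition Pso (N : nat) (lam alpha p Re : R) : R :=
  if Rle_dec Re 0 then 1
  else 1 - exp (- (INR N * K1 lam alpha * Rpower (beta Re / p) (- (2 / alpha))
                   * exp (- (beta Re / p)))).

Definition Re_star (N : nat) (lam alpha p eps : R) : R :=
  log2 (2 * p / alpha *
        W0 (alpha / 2 * Rpower (ln (1 / (1 - eps)) / (INR N * K1 lam alpha))
                               (- (alpha / 2))) + 1).

Definition Pt' (N : nat) (L alpha p Rt : R) : R :=
  exp (- (beta Rt * (Rpower (L / INR N) alpha + 1) / p)).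

Definition U_OFT (N : nat) (L alpha p Rt Rs : R) : R :=
  Pt' N L alpha p Rt * Rs / INR N.

Definition U (N : nat) (L alpha p lam eps Rt : R) : R :=
  (Rt - Re_star N lam alpha p eps) * exp (- (K2 N L alpha p * (Rpower 2 Rt - 1)))
  / INR N.

Definition Rt_star (N : nat) (L alpha p lam eps : R) : R :=
  Re_star N lam alpha p eps
  + / ln 2 * W0 (Rpower 2 (- Re_star N lam alpha p eps) / K2 N L alpha p).

Definition Rs_star (N : nat) (L alpha p lam eps : R) : R :=
  / ln 2 * W0 (Rpower 2 (- Re_star N lam alpha p eps) / K2 N L alpha p).

(* For R_e > 0 the outage probability is 1 - exp(-phi R_e) with phi strictly decreasing
   (K1 > 0 because the Gauss sequence defining Gamma is increasing and bounded), and the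
   Lambert-W formula for R_e^* solves phi R_e^* = ln(1/(1-eps)); hence P_so <= eps iff
   R_e >= R_e^*.  The derivative of U has the sign of 1 - K2 ln 2 (x - R_e^* ) 2^x, and
   (x - R_e^* ) 2^x increases wherever it is positive, so U increases strictly up to the zero
   of that factor, which the Lambert-W formula for R_t^* locates, and decreases strictly
   after it; a unimodal function is quasi-concave.  Finally the outage constraint forces
   R_s <= R_t - R_e^*, so U_OFT R_t R_s <= U R_t <= U R_t^* = U_OFT R_t^* R_s^*. *)

From Coquelicot Require Import Coquelicot.
From Stdlib Require Import Reals Lra Lia ClassicalEpsilon Factorial.
Open Scope R_scope.

Lemma exp_le_compat x y : x <= y -> exp x <= exp y.
Proof. intros [H|H]; [left; exact (exp_increasing _ _ H) | right; rewrite H; reflexivity]. Qed.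

Lemma ln_2_pos : 0 < ln 2.
Proof. pose proof ln_lt_2. lra. Qed.

Lemma ln_le_sub_1 x : 0 < x -> ln x <= x - 1.
Proof. intro Hx. pose proof (exp_ineq1_le (ln x)) as H. rewrite exp_ln in H; lra. Qed.

Lemma ln_1p_le y : 0 <= y -> ln (1 + y) <= y.
Proof. intro Hy. pose proof (ln_le_sub_1 (1 + y)). lra. Qed.

Lemma ln_1p_ge y : 0 <= y -> y / (1 + y) <= ln (1 + y).
Proof.
  intro Hy. assert (Hinv : 0 < / (1 + y)) by (apply Rinv_0_lt_compat; lra).
  pose proof (ln_le_sub_1 _ Hinv) as H. rewrite ln_Rinv in H by lra.
  replace (/ (1 + y) - 1) with (- (y / (1 + y))) in H by (field; lra). lra.
Qed.

Lemma rising_pos s n : 0 < s -> 0 < rising s n.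
Proof.
  intro Hs. induction n as [|n IH]; [exact Hs|].
  change (0 < rising s n * (s + INR (S n))).
  apply Rmult_lt_0_compat; [exact IH|]. pose proof (pos_INR (S n)). lra.
Qed.

Definition gauss_seq (s : R) (n : nat) : R :=
  INR (fact n) * Rpower (INR n) s / rising s n.

Lemma gauss_seq_pos s n : 0 < s -> 0 < gauss_seq s n.
Proof.
  intro Hs. apply Rdiv_lt_0_compat; [|exact (rising_pos s n Hs)].
  apply Rmult_lt_0_compat; [apply lt_0_INR, lt_O_fact | apply exp_pos].
Qed.

Definition gauss_log_ratio (s m : R) : R := s * ln (1 + / m) - ln (1 + s / (m + 1)).

Lemma gauss_seq_succ s m : 0 < s -> (1 <= m)%nat ->
  gauss_seq s (S m) = gauss_seq s m * exp (gauss_log_ratio s (INR m)).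
Proof.
  intros Hs Hm. assert (Hm0 : 0 < INR m) by (apply lt_0_INR; lia).
  assert (Hy : 0 < s / (INR m + 1)) by (apply Rdiv_lt_0_compat; lra).
  pose proof (rising_pos s m Hs).
  unfold gauss_seq, gauss_log_ratio.
  unfold Rminus; rewrite exp_plus, exp_Ropp, exp_ln by lra.
  change (exp (s * ln (1 + / INR m))) with (Rpower (1 + / INR m) s).
  change (fact (S m)) with (S m * fact m)%nat. rewrite mult_INR.
  replace (INR (S m)) with (INR m * (1 + / INR m)) at 2 by (rewrite S_INR; field; lra).
  rewrite <- Rpower_mult_distr
    by (try lra; assert (0 < / INR m) by (apply Rinv_0_lt_compat; lra); lra).
  change (rising s (S m)) with (rising s m * (s + INR (S m))). rewrite S_INR.
  field. repeat split; lra.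
Qed.

Lemma gauss_log_ratio_bounds s m : 0 < s -> 1 <= m ->
  0 <= gauss_log_ratio s m <= (s + s * s) * (/ m - / (m + 1)).
Proof.
  intros Hs Hm. unfold gauss_log_ratio.
  assert (Hx : 0 <= / m) by (left; apply Rinv_0_lt_compat; lra).
  set (y := s / (m + 1)).
  assert (Hy : 0 <= y) by (left; apply Rdiv_lt_0_compat; lra).
  assert (Hlow : / (m + 1) <= ln (1 + / m)).
  { replace (/ (m + 1)) with (/ m / (1 + / m)) by (field; lra). exact (ln_1p_ge _ Hx). }
  assert (Hquad : y - y * y <= ln (1 + y)).
  { eapply Rle_trans; [|exact (ln_1p_ge _ Hy)].
    replace (y / (1 + y)) with (y - y * y + y * y * y / (1 + y)) by (field; lra).
    assert (0 <= y * y * y / (1 + y))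
      by (apply Rmult_le_pos; [nra | left; apply Rinv_0_lt_compat; lra]).
    lra. }
  assert (Hsq : y * y <= s * s * (/ m - / (m + 1))).
  { unfold y. replace (/ m - / (m + 1)) with (/ (m * (m + 1))) by (field; lra).
    replace (s / (m + 1) * (s / (m + 1))) with (s * s * / ((m + 1) * (m + 1))) by (field; lra).
    apply Rmult_le_compat_l; [nra|]. apply Rinv_le_contravar; nra. }
  split.
  - pose proof (ln_1p_le y Hy). unfold y in *. unfold Rdiv in *. nra.
  - pose proof (ln_1p_le _ Hx). unfold y in *. unfold Rdiv in *. nra.
Qed.

Lemma gauss_seq_growing s : 0 < s -> Un_growing (fun n => gauss_seq s (S n)).
Proof.
  intros Hs n. rewrite (gauss_seq_succ s (S n)) by (auto; lia).
  assert (Hm : 1 <= INR (S n)) by (apply (le_INR 1); lia).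
  destruct (gauss_log_ratio_bounds s _ Hs Hm) as [Hr _].
  pose proof (exp_le_compat _ _ Hr) as He. rewrite exp_0 in He.
  pose proof (gauss_seq_pos s (S n) Hs). nra.
Qed.

(* The log-ratios telescope: sum over m < n+1 of 1/m - 1/(m+1) is 1 - 1/(n+1). *)
Lemma gauss_seq_le s n : 0 < s ->
  gauss_seq s (S n) <= gauss_seq s 1 * exp ((s + s * s) * (1 - / INR (S n))).
Proof.
  intro Hs. induction n as [|n IH].
  - replace (1 - / INR 1) with 0 by (simpl; field).
    rewrite Rmult_0_r, exp_0, Rmult_1_r. right; reflexivity.
  - rewrite (gauss_seq_succ s (S n)) by (auto; lia).
    assert (Hm : 1 <= INR (S n)) by (apply (le_INR 1); lia).
    destruct (gauss_log_ratio_bounds s _ Hs Hm) as [_ Hr].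
    replace ((s + s * s) * (1 - / INR (S (S n))))
      with ((s + s * s) * (1 - / INR (S n)) + (s + s * s) * (/ INR (S n) - / (INR (S n) + 1)))
      by (rewrite (S_INR (S n)); ring).
    rewrite exp_plus, <- Rmult_assoc.
    apply Rmult_le_compat; [left; apply gauss_seq_pos; exact Hs | left; apply exp_pos
                           | exact IH | apply exp_le_compat; exact Hr].
Qed.

Lemma Gamma_pos s : 0 < s -> 0 < Gamma s.
Proof.
  intro Hs. set (u := fun n => gauss_seq s (S n)).
  assert (Hbound : bound (EUn u)).
  { exists (gauss_seq s 1 * exp (s + s * s)). intros x [n ->]. unfold u.
    eapply Rle_trans; [apply gauss_seq_le; exact Hs|].
    apply Rmult_le_compat_l; [left; apply gauss_seq_pos; exact Hs|]. apply exp_le_compat.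
    assert (0 < / INR (S n)) by (apply Rinv_0_lt_compat, lt_0_INR; lia). nra. }
  destruct (Un_cv_crit u (gauss_seq_growing s Hs) Hbound) as [l Hl].
  assert (Hlim : Un_cv (gauss_seq s) l).
  { intros e He. destruct (Hl e He) as [M HM]. exists (S M). intros [|n] Hn; [lia|].
    apply HM. lia. }
  assert (HGamma : Un_cv (gauss_seq s) (Gamma s))
    by (unfold Gamma; apply epsilon_spec; exists l; exact Hlim).
  rewrite <- (UL_sequence _ _ _ Hlim HGamma).
  apply Rlt_le_trans with (u 0%nat); [apply gauss_seq_pos; exact Hs|].
  exact (growing_ineq u l (gauss_seq_growing s Hs) Hl 0).
Qed.

Lemma W0_spec x : 0 < x -> 0 < W0 x /\ W0 x * exp (W0 x) = x.
Proof.
  intro Hx.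
  assert (Hex : exists w, -1 <= w /\ w * exp w = x).
  { destruct (IVT (fun w => w * exp w - x) 0 x) as [w [Hw1 Hw2]].
    - intro y. reg.
    - exact Hx.
    - rewrite Rmult_0_l. lra.
    - pose proof (exp_ineq1 x ltac:(lra)). nra.
    - exists w; split; lra. }
  destruct (epsilon_spec (inhabits 0) _ Hex) as [_ Hw]. fold (W0 x) in Hw.
  split; [|exact Hw].
  destruct (Rle_or_lt (W0 x) 0) as [Hle|Hlt]; [|exact Hlt].
  pose proof (exp_pos (W0 x)). nra.
Qed.

Lemma W0_inverts_pow_exp a y : 0 < a -> 0 < y ->
  let t := W0 (a * Rpower y (- a)) / a in
  Rpower t (- / a) * exp (- t) = y.
Proof.
  intros Ha Hy t.
  destruct (W0_spec (a * Rpower y (- a))) as [Hw Hwe];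
    [apply Rmult_lt_0_compat; [exact Ha | apply exp_pos]|].
  set (w := W0 (a * Rpower y (- a))) in *.
  assert (Ht : 0 < t) by (apply Rdiv_lt_0_compat; assumption).
  assert (Hexp : exp (- t) = Rpower (exp w) (- / a)).
  { unfold Rpower. rewrite ln_exp. f_equal. unfold t. field. lra. }
  rewrite Hexp, Rpower_mult_distr by (try exact Ht; apply exp_pos).
  replace (t * exp w) with (Rpower y (- a))
    by (unfold t; apply (Rmult_eq_reg_l a); [rewrite <- Rmult_assoc, <- Hwe; field|]; lra).
  rewrite Rpower_mult. replace (- a * - / a) with 1 by (field; lra).
  apply Rpower_1. exact Hy.
Qed.

Lemma decreasing_le_iff (f : R -> R) a x y :
  (forall u v, a < u -> u < v -> f v < f u) -> a < x -> a < y -> (f x <= f y <-> y <= x).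
Proof.
  intros Hf Hx Hy. split; intro H.
  - destruct (Rlt_or_le x y) as [Hxy|Hxy]; [|exact Hxy]. pose proof (Hf x y Hx Hxy). lra.
  - destruct H as [Hyx|<-]; [left; exact (Hf y x Hy Hyx) | right; reflexivity].
Qed.

Lemma decreasing_eq_iff (f : R -> R) a x y :
  (forall u v, a < u -> u < v -> f v < f u) -> a < x -> a < y -> (f x = f y <-> x = y).
Proof.
  intros Hf Hx Hy. split; intro H; [|subst; reflexivity].
  destruct (Rtotal_order x y) as [Hxy|[Hxy|Hxy]]; [pose proof (Hf x y Hx Hxy) | exact Hxy
                                                  | pose proof (Hf y x Hy Hxy)]; lra.
Qed.

Lemma beta_increasing a b : a < b -> beta a < beta b.
Proof.
  intro Hab. unfold beta. apply Rplus_lt_compat_r, Rpower_lt; [lra | exact Hab].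
Qed.

Lemma beta_pos r : 0 < r -> 0 < beta r.
Proof.
  intro Hr. pose proof (beta_increasing 0 r Hr). unfold beta in *. rewrite Rpower_O in *; lra.
Qed.

Lemma beta_log2 y : 0 < y -> beta (log2 y) = y - 1.
Proof.
  intro Hy. unfold beta, log2, Rpower. pose proof ln_2_pos.
  replace (ln y / ln 2 * ln 2) with (ln y) by (field; lra).
  rewrite exp_ln; [reflexivity | exact Hy].
Qed.

Lemma K1_pos lam alpha : 0 < lam -> 0 < alpha -> 0 < K1 lam alpha.
Proof.
  intros Hlam Halpha. unfold K1. pose proof PI_RGT_0.
  apply Rmult_lt_0_compat; [nra|]. apply Gamma_pos.
  assert (0 < 2 / alpha) by (apply Rdiv_lt_0_compat; lra). lra.
Qed.

Section Secrecy_outage.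

Variables (N : nat) (lam alpha p eps : R).
Hypotheses (HN : (1 <= N)%nat) (Hlam : 0 < lam) (Halpha : 0 < alpha) (Hp : 0 < p)
  (Heps : 0 < eps < 1).

Definition outage_exponent (Re : R) : R :=
  INR N * K1 lam alpha * Rpower (beta Re / p) (- (2 / alpha)) * exp (- (beta Re / p)).

Lemma outage_scale_pos : 0 < INR N * K1 lam alpha.
Proof. apply Rmult_lt_0_compat; [apply lt_0_INR; lia | exact (K1_pos lam alpha Hlam Halpha)]. Qed.

Lemma Pso_pos_rate Re : 0 < Re -> Pso N lam alpha p Re = 1 - exp (- outage_exponent Re).
Proof. intro HRe. unfold Pso. destruct (Rle_dec Re 0); [lra | reflexivity]. Qed.

Lemma outage_exponent_decreasing a b : 0 < a -> a < b -> outage_exponent b < outage_exponent a.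
Proof.
  intros Ha Hab. unfold outage_exponent, Rpower.
  pose proof (beta_pos a Ha). pose proof (beta_increasing a b Hab).
  assert (Hqa : 0 < beta a / p) by (apply Rdiv_lt_0_compat; lra).
  assert (Hqab : beta a / p < beta b / p)
    by (apply Rmult_lt_compat_r; [apply Rinv_0_lt_compat|]; lra).
  assert (0 < 2 / alpha) by (apply Rdiv_lt_0_compat; lra).
  pose proof (ln_increasing _ _ Hqa Hqab).
  apply Rmult_le_0_lt_compat;
    [left; apply Rmult_lt_0_compat; [exact outage_scale_pos | apply exp_pos]
    | left; apply exp_pos
    | apply Rmult_lt_compat_l; [exact outage_scale_pos|]
    | ]; apply exp_increasing; nra.
Qed.

Lemma Pso_decreasing a b : 0 < a -> a < b -> Pso N lam alpha p b < Pso N lam alpha p a.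
Proof.
  intros Ha Hab. rewrite !Pso_pos_rate by lra.
  pose proof (exp_increasing _ _ (Ropp_lt_contravar _ _ (outage_exponent_decreasing a b Ha Hab))).
  lra.
Qed.

Let c := INR N * K1 lam alpha.
Let A := ln (1 / (1 - eps)).
Let w := W0 (alpha / 2 * Rpower (A / c) (- (alpha / 2))).

Lemma outage_level_pos : 0 < A.
Proof.
  unfold A. rewrite <- ln_1. apply ln_increasing; [lra|].
  apply (Rmult_lt_reg_r (1 - eps)); [lra|]. field_simplify; lra.
Qed.

Lemma Re_star_eq : Re_star N lam alpha p eps = log2 (2 * p / alpha * w + 1).
Proof. reflexivity. Qed.

Lemma Re_star_W0_term_pos : 0 < 2 * p / alpha * w.
Proof.
  assert (0 < A / c) by (apply Rdiv_lt_0_compat; [exact outage_level_pos | exact outage_scale_pos]).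
  destruct (W0_spec (alpha / 2 * Rpower (A / c) (- (alpha / 2)))) as [Hw _];
    [apply Rmult_lt_0_compat; [lra | apply exp_pos]|].
  apply Rmult_lt_0_compat; [apply Rdiv_lt_0_compat; lra | exact Hw].
Qed.

Lemma Re_star_pos : 0 < Re_star N lam alpha p eps.
Proof.
  rewrite Re_star_eq. unfold log2. apply Rdiv_lt_0_compat; [|exact ln_2_pos].
  rewrite <- ln_1. apply ln_increasing; [lra|]. pose proof Re_star_W0_term_pos. lra.
Qed.

Lemma Pso_Re_star : Pso N lam alpha p (Re_star N lam alpha p eps) = eps.
Proof.
  rewrite Pso_pos_rate by exact Re_star_pos.
  assert (HAc : 0 < A / c)
    by (apply Rdiv_lt_0_compat; [exact outage_level_pos | exact outage_scale_pos]).
  assert (Hphi : outage_exponent (Re_star N lam alpha p eps) = A).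
  { unfold outage_exponent. rewrite Re_star_eq, beta_log2 by (pose proof Re_star_W0_term_pos; lra).
    replace ((2 * p / alpha * w + 1 - 1) / p) with (w / (alpha / 2)) by (field; lra).
    replace (- (2 / alpha)) with (- / (alpha / 2)) by (field; lra).
    unfold w. rewrite Rmult_assoc, (W0_inverts_pow_exp (alpha / 2) (A / c)) by lra.
    fold c. field. pose proof outage_scale_pos. unfold c. lra. }
  rewrite Hphi. unfold A. rewrite exp_Ropp, exp_ln by (apply Rdiv_lt_0_compat; lra).
  field. lra.
Qed.

Lemma Pso_le_iff Re : Pso N lam alpha p Re <= eps <-> Re_star N lam alpha p eps <= Re.
Proof.
  pose proof Re_star_pos. destruct (Rle_or_lt Re 0) as [HRe|HRe].
  - unfold Pso. destruct (Rle_dec Re 0); [split; intro; lra | lra].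
  - rewrite <- Pso_Re_star at 1. apply (decreasing_le_iff _ 0); assumption || exact Pso_decreasing.
Qed.

Lemma Pso_eq_iff Re : Pso N lam alpha p Re = eps <-> Re = Re_star N lam alpha p eps.
Proof.
  pose proof Re_star_pos. destruct (Rle_or_lt Re 0) as [HRe|HRe].
  - unfold Pso. destruct (Rle_dec Re 0); [split; intro; lra | lra].
  - rewrite <- Pso_Re_star at 1. apply (decreasing_eq_iff _ 0); assumption || exact Pso_decreasing.
Qed.

End Secrecy_outage.

Section Unimodal.

Variables (f : R -> R) (m : R).
Hypothesis f_increasing : forall x y, x < y -> y <= m -> f x < f y.
Hypothesis f_decreasing : forall x y, m <= x -> x < y -> f y < f x.

Lemma unimodal_le_left x y : x <= y -> y <= m -> f x <= f y.
Proof. intros [Hxy|<-] Hy; [left; exact (f_increasing x y Hxy Hy) | right; reflexivity]. Qed.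

Lemma unimodal_le_right x y : m <= x -> x <= y -> f y <= f x.
Proof. intros Hx [Hxy|<-]; [left; exact (f_decreasing x y Hx Hxy) | right; reflexivity]. Qed.

Lemma unimodal_quasi_concave x y t : 0 <= t <= 1 ->
  Rmin (f x) (f y) <= f (t * x + (1 - t) * y).
Proof.
  intro Ht. set (z := t * x + (1 - t) * y).
  assert (Hz : Rmin x y <= z <= Rmax x y) by (unfold z, Rmin, Rmax; destruct (Rle_dec x y); nra).
  unfold Rmin, Rmax in *.
  destruct (Rle_or_lt z m) as [Hzm|Hzm]; destruct (Rle_dec x y);
    [ eapply Rle_trans; [apply Rmin_l | apply unimodal_le_left; lra]
    | eapply Rle_trans; [apply Rmin_r | apply unimodal_le_left; lra]
    | eapply Rle_trans; [apply Rmin_r | apply unimodal_le_right; lra]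
    | eapply Rle_trans; [apply Rmin_l | apply unimodal_le_right; lra] ].
Qed.

Lemma unimodal_argmax x : x <> m -> f x < f m.
Proof.
  intro Hx. destruct (Rtotal_order x m) as [H|[H|H]];
    [apply f_increasing; lra | contradiction | apply f_decreasing; lra].
Qed.

End Unimodal.

Lemma increasing_of_deriv_pos (f f' : R -> R) m :
  (forall x, derivable_pt_lim f x (f' x)) -> (forall x, x < m -> 0 < f' x) ->
  forall x y, x < y -> y <= m -> f x < f y.
Proof.
  intros Hf Hpos x y Hxy Hy.
  destruct (MVT_cor2 f f' x y Hxy (fun c _ => Hf c)) as [c [Hc Hcxy]].
  pose proof (Hpos c ltac:(lra)). nra.
Qed.

Lemma decreasing_of_deriv_neg (f f' : R -> R) m :
  (forall x, derivable_pt_lim f x (f' x)) -> (forall x, m < x -> f' x < 0) ->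
  forall x y, m <= x -> x < y -> f y < f x.
Proof.
  intros Hf Hneg x y Hx Hxy.
  destruct (MVT_cor2 f f' x y Hxy (fun c _ => Hf c)) as [c [Hc Hcxy]].
  pose proof (Hneg c ltac:(lra)). nra.
Qed.

Definition throughput (R0 K x : R) : R := (x - R0) * exp (- (K * (Rpower 2 x - 1))).

Definition throughput_argmax (R0 K : R) : R := R0 + / ln 2 * W0 (Rpower 2 (- R0) / K).

Lemma throughput_deriv R0 K x : derivable_pt_lim (throughput R0 K) x
  (exp (- (K * (Rpower 2 x - 1))) * (1 - K * ln 2 * ((x - R0) * Rpower 2 x))).
Proof.
  unfold throughput, Rpower. apply is_derive_Reals. auto_derive; [exact I|]. unfold Rminus. ring.
Qed.

Lemma shifted_pow2_increasing R0 x y : x < y -> R0 < y ->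
  (x - R0) * Rpower 2 x < (y - R0) * Rpower 2 y.
Proof.
  intros Hxy Hy. pose proof (Rpower_lt 2 x y ltac:(lra) Hxy).
  pose proof (exp_pos (x * ln 2)). change (Rpower 2 x) with (exp (x * ln 2)) in *. nra.
Qed.

Lemma throughput_argmax_spec R0 K : 0 < K ->
  R0 < throughput_argmax R0 K /\
  K * ln 2 * ((throughput_argmax R0 K - R0) * Rpower 2 (throughput_argmax R0 K)) = 1.
Proof.
  intro HK. pose proof ln_2_pos.
  destruct (W0_spec (Rpower 2 (- R0) / K)) as [Hw Hwe];
    [apply Rdiv_lt_0_compat; [apply exp_pos | exact HK]|].
  unfold throughput_argmax. set (w := W0 (Rpower 2 (- R0) / K)) in *.
  split.
  { assert (0 < / ln 2 * w) by (apply Rmult_lt_0_compat; [apply Rinv_0_lt_compat|]; lra). lra. }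
  rewrite Rpower_plus.
  replace (Rpower 2 (/ ln 2 * w)) with (exp w) by (unfold Rpower; f_equal; field; lra).
  replace (K * ln 2 * ((R0 + / ln 2 * w - R0) * (Rpower 2 R0 * exp w)))
    with (K * Rpower 2 R0 * (w * exp w)) by (field; lra).
  rewrite Hwe, Rpower_Ropp. field. split; [apply Rgt_not_eq, exp_pos | lra].
Qed.

Lemma throughput_increasing R0 K : 0 < K ->
  forall x y, x < y -> y <= throughput_argmax R0 K -> throughput R0 K x < throughput R0 K y.
Proof.
  intro HK. destruct (throughput_argmax_spec R0 K HK) as [Hm Hstat].
  apply (increasing_of_deriv_pos _ _ _ (throughput_deriv R0 K)).
  intros x Hx. apply Rmult_lt_0_compat; [apply exp_pos|].
  pose proof (shifted_pow2_increasing R0 x _ Hx Hm). pose proof ln_2_pos.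
  assert (0 < K * ln 2) by nra. nra.
Qed.

Lemma throughput_decreasing R0 K : 0 < K ->
  forall x y, throughput_argmax R0 K <= x -> x < y -> throughput R0 K y < throughput R0 K x.
Proof.
  intro HK. destruct (throughput_argmax_spec R0 K HK) as [Hm Hstat].
  apply (decreasing_of_deriv_neg _ _ _ (throughput_deriv R0 K)).
  intros x Hx. pose proof (exp_pos (- (K * (Rpower 2 x - 1)))).
  pose proof (shifted_pow2_increasing R0 _ x Hx ltac:(lra)). pose proof ln_2_pos.
  assert (0 < K * ln 2) by nra.
  assert (1 - K * ln 2 * ((x - R0) * Rpower 2 x) < 0) by nra. nra.
Qed.

Lemma K2_pos N L alpha p : 0 < p -> 0 < K2 N L alpha p.
Proof.
  intro Hp. unfold K2. apply Rdiv_lt_0_compat; [|exact Hp].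
  pose proof (exp_pos (alpha * ln (L / INR N))). unfold Rpower. lra.
Qed.

Lemma U_OFT_throughput N L alpha p R0 Rt :
  U_OFT N L alpha p Rt (Rt - R0) = throughput R0 (K2 N L alpha p) Rt / INR N.
Proof.
  unfold U_OFT, Pt', throughput, K2, beta. rewrite Rmult_comm. unfold Rdiv. f_equal. f_equal.
  f_equal. f_equal. ring.
Qed.

Lemma U_OFT_le_compat N L alpha p Rt Rs Rs' : (1 <= N)%nat -> Rs <= Rs' ->
  U_OFT N L alpha p Rt Rs <= U_OFT N L alpha p Rt Rs'.
Proof.
  intros HN Hs. unfold U_OFT, Rdiv. apply Rmult_le_compat_r;
    [left; apply Rinv_0_lt_compat, lt_0_INR; lia|].
  apply Rmult_le_compat_l; [left; apply exp_pos | exact Hs].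
Qed.

Theorem theorem2 (N : nat) (L alpha p lam eps : R) :
  (1 <= N)%nat -> 0 < L -> 0 < alpha -> 0 < p -> 0 < lam -> 0 < eps < 1 ->
  let Res := Re_star N lam alpha p eps in
  let Uf := U N L alpha p lam eps in
  let Rts := Rt_star N L alpha p lam eps in
  let Rss := Rs_star N L alpha p lam eps in
  (* (i) *)
  (forall Rt Rs, Rs <= Rt -> 0 < Rs ->
     (Pso N lam alpha p (Rt - Rs) <= eps <-> Res <= Rt - Rs) /\
     (Pso N lam alpha p (Rt - Rs) = eps <-> Rt - Rs = Res)) /\
  (* (ii) quasi-concavity on (R_e^*, oo) and unique maximizer *)
  (forall x y t, Res < x -> Res < y -> 0 <= t <= 1 ->
     Rmin (Uf x) (Uf y) <= Uf (t * x + (1 - t) * y)) /\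
  Res < Rts /\
  (forall Rt, Res < Rt -> Rt <> Rts -> Uf Rt < Uf Rts) /\
  (* (iii) optimal rate pair for OFT *)
  (Rss <= Rts /\ 0 < Rss /\ Pso N lam alpha p (Rts - Rss) <= eps) /\
  (forall Rt Rs, Rs <= Rt -> 0 < Rs -> Pso N lam alpha p (Rt - Rs) <= eps ->
     U_OFT N L alpha p Rt Rs <= U_OFT N L alpha p Rts Rss).
Proof.
  intros HN _ Halpha Hp Hlam Heps Res Uf Rts Rss.
  pose proof (Re_star_pos N lam alpha p eps HN Hlam Halpha Hp Heps) as HRes.
  pose proof (Pso_le_iff N lam alpha p eps HN Hlam Halpha Hp Heps) as Hle_iff.
  pose proof (Pso_eq_iff N lam alpha p eps HN Hlam Halpha Hp Heps) as Heq_iff.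
  fold Res in HRes, Hle_iff, Heq_iff.
  set (K := K2 N L alpha p). pose proof (K2_pos N L alpha p Hp) as HK. fold K in HK.
  assert (HN' : 0 < / INR N) by (apply Rinv_0_lt_compat, lt_0_INR; lia).
  assert (HUf_incr : forall x y, x < y -> y <= Rts -> Uf x < Uf y).
  { intros x y Hxy Hy. apply Rmult_lt_compat_r; [exact HN'|].
    exact (throughput_increasing Res K HK x y Hxy Hy). }
  assert (HUf_decr : forall x y, Rts <= x -> x < y -> Uf y < Uf x).
  { intros x y Hx Hxy. apply Rmult_lt_compat_r; [exact HN'|].
    exact (throughput_decreasing Res K HK x y Hx Hxy). }
  assert (HRts : Res < Rts) by exact (proj1 (throughput_argmax_spec Res K HK)).
  assert (HRss : Rss = Rts - Res) by (unfold Rss, Rts, Rs_star, Rt_star; fold Res; ring).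
  split; [intros Rt Rs _ _; exact (conj (Hle_iff _) (Heq_iff _))|].
  split; [intros x y t _ _; exact (unimodal_quasi_concave Uf Rts HUf_incr HUf_decr x y t)|].
  split; [exact HRts|].
  split; [intros Rt _; exact (unimodal_argmax Uf Rts HUf_incr HUf_decr Rt)|].
  split; [split; [|split]; [| |apply Hle_iff]; rewrite HRss; lra|].
  intros Rt Rs _ _ Hout. apply Hle_iff in Hout.
  replace (U_OFT N L alpha p Rts Rss) with (Uf Rts)
    by (rewrite HRss; symmetry; apply U_OFT_throughput).
  apply Rle_trans with (Uf Rt).
  - replace (Uf Rt) with (U_OFT N L alpha p Rt (Rt - Res)) by apply U_OFT_throughput.
    apply U_OFT_le_compat; [exact HN|]. unfold Res in *. lra.
  - destruct (Req_dec Rt Rts) as [->|Hne]; [right; reflexivity|].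
    left. exact (unimodal_argmax Uf Rts HUf_incr HUf_decr Rt Hne).
Qed.
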